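(* A set $\mathcal{O}$ of upwards-closed modalities is decomposable if and only if for any $r\in TT\mathbf{1}$ and $o\in\mathcal{O}$ such that $\mu r\in o(\{*\})$, there is a collection of pairs $\{(o_i,\Phi_i)\}_{i\in I}$ with each $o_i\in\mathcal{O}$ and $\Phi_i\in\mathcal{T}$ such that: (1) for all $i\in I$, $r\in o_i([\![\Phi_i]\!])$; and (2) for all $r'\in TT\mathbf{1}$, if $r'\in o_i([\![\Phi_i]\!])$ for all $i\in I$, then $\mu r'\in o(\{*\})$.
   Context: $\Sigma$ is a signature of effect operations with arities $\alpha^n\to\alpha$, $\mathbf{N}\times\alpha^n\to\alpha$, $\alpha^{\mathbf{N}}\to\alpha$ or $\mathbf{N}\times\alpha^{\mathbf{N}}\to\alpha$. $TX$ is the set of possibly infinite labelled trees with leaves $\bot$ or elements of $X$ and internal nodes labelled by operations (or $\sigma_m$, $m\in\mathbb{N}$) with children according to arity; $t\le t'$ iff $t$ is obtained from $t'$ by replacing subtrees with $\bot$. $\mu:TTX\to TX$ replaces each leaf of a tree of trees by that tree. $\mathbf{1}=\{*\}$. A set $\mathcal{O}$ of modalities is given with $[\![o]\!]\subseteq T\mathbf{1}$; upwards closed means $[\![o]\!]$ is upward closed under $\le$. $t[\in P]\in T\mathbf{1}$ replaces leaves in $P$ by $*$ and other $X$-leaves by $\bot$; $o(A)=\{t\in TX\mid t[\in A]\in[\![o]\!]\}$. $\mathcal{T}$ is the least class of formulas containing $o(\top),o(\bot)$ ($o\in\mathcal{O}$) closed under arbitrary $\bigvee,\bigwedge$, with $[\![o(\top)]\!]=o(\{*\})$,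 $[\![o(\bot)]\!]=o(\emptyset)$, unions/intersections. On $T\mathbf{1}$: $t\trianglelefteq t'$ iff $\forall\Phi\in\mathcal{T}$, $t\in[\![\Phi]\!]\Rightarrow t'\in[\![\Phi]\!]$. On $TT\mathbf{1}$: $r\preccurlyeq r'$ iff $\forall o\,\forall\Phi\in\mathcal{T}$, $r\in o([\![\Phi]\!])\Rightarrow r'\in o([\![\Phi]\!])$. $\mathcal{O}$ is decomposable if $r\preccurlyeq r'$ implies $\mu r\trianglelefteq\mu r'$ for all $r,r'\in TT\mathbf{1}$. *)

From mathcomp Require Import all_boot.
From Stdlib Require Import ClassicalEpsilon.

Set Implicit Arguments.
Unset Strict Implicit.
Unset Printing Implicit Defensive.

(* Arities of effect operations:
   alpha^n -> alpha, N x alpha^n -> alpha, alpha^N -> alpha, N x alpha^N -> alpha *)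
Inductive arity : Type :=
| ArFin (n : nat)
| ArNatFin (n : nat)
| ArInf
| ArNatInf.

Definition param (a : arity) : Type :=
  match a with
  | ArNatFin _ | ArNatInf => nat
  | _ => unit
  end.

Definition child (a : arity) : Type :=
  match a with
  | ArFin n | ArNatFin n => 'I_n
  | ArInf | ArNatInf => nat
  end.

Section Trees.
Variables (Op : Type) (ar : Op -> arity).

CoInductive tree (X : Type) : Type :=
| Bot
| Leaf (x : X)
| Node (o : Op) (p : param (ar o)) (k : child (ar o) -> tree X).

Arguments Bot {X}.

CoInductive tle (X : Type) : tree X -> tree X -> Prop :=
| tle_bot (t : tree X) : tle Bot t
| tle_leaf (x : X) : tle (Leaf x) (Leaf x)
| tle_node (o : Op) (p : param (ar o)) (k k' : child (ar o) -> tree X) :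
    (forall i, tle (k i) (k' i)) -> tle (Node p k) (Node p k').

CoFixpoint mu (X : Type) (r : tree (tree X)) : tree X :=
  match r with
  | Bot => Bot
  | Leaf t => t
  | Node o p k => Node p (fun i => mu (k i))
  end.

CoFixpoint restr (X : Type) (P : X -> Prop) (t : tree X) : tree unit :=
  match t with
  | Bot => Bot
  | Leaf x => if excluded_middle_informative (P x) then Leaf tt else Bot
  | Node o p k => Node p (fun i => restr P (k i))
  end.

Section Modalities.
Variables (O : Type) (sem : O -> tree unit -> Prop).

Definition upwards_closed : Prop :=
  forall (o : O) (t t' : tree unit), sem o t -> tle t t' -> sem o t'.

Definition modal (X : Type) (o : O) (A : X -> Prop) : tree X -> Prop :=
  fun t => sem o (restr A t).

Inductive formula : Type :=
| FTop (o : O)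
| FBotm (o : O)
| FOr (J : Type) (f : J -> formula)
| FAnd (J : Type) (f : J -> formula).

Fixpoint fsem (phi : formula) : tree unit -> Prop :=
  match phi with
  | FTop o => modal o (fun _ : unit => True)
  | FBotm o => modal o (fun _ : unit => False)
  | FOr J f => fun t => exists i : J, fsem (f i) t
  | FAnd J f => fun t => forall i : J, fsem (f i) t
  end.

Definition tri (t t' : tree unit) : Prop :=
  forall phi : formula, fsem phi t -> fsem phi t'.

Definition prec (r r' : tree (tree unit)) : Prop :=
  forall (o : O) (phi : formula), modal o (fsem phi) r -> modal o (fsem phi) r'.

Definition decomposable : Prop :=
  forall r r' : tree (tree unit), prec r r' -> tri (mu r) (mu r').

End Modalities.
End Trees.

(* For (->), take as decomposition all pairs (o', Phi) with r in o'([[Phi]]): an r' satisfying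
   them all has r <~ r', so decomposability applied to o(top) gives mu r' in o({*}).
   For (<-), formulas are built from the atoms o(top) and o(bot) by joins and meets, so it
   suffices to transport these atoms from mu r to mu r'. For o(top) this is the hypothesis applied to r. For o(bot),
   restrict every inner tree of r to the empty set: mu r lies in o(empty) iff mu of the restricted
   tree lies in o({*}), and the restricted tree satisfies o(Phi) iff r satisfies o(Phi'), where Phi'
   is Phi with every o(top) replaced by o(bot); hence <~ is preserved and the hypothesis applies
   again. Upward closure makes every [[o]] invariant under bisimilarity, which replaces equality
   of coinductive trees throughout. *)
From Stdlib Require Import ClassicalEpsilon Setoid.

Set Implicit Arguments.

Section Bisimulation.
Variables (Op : Type) (ar : Op -> arity) (X : Type).

CoInductive bisim : tree ar X -> tree ar X -> Prop :=
| bisim_bot : bisim (Bot ar X) (Bot ar X)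
| bisim_leaf (x : X) : bisim (Leaf ar x) (Leaf ar x)
| bisim_node (o : Op) (p : param (ar o)) (k k' : child (ar o) -> tree ar X) :
    (forall i, bisim (k i) (k' i)) -> bisim (Node p k) (Node p k').

Inductive tree_step (R : tree ar X -> tree ar X -> Prop) : tree ar X -> tree ar X -> Prop :=
| step_bot : tree_step R (Bot ar X) (Bot ar X)
| step_leaf (x : X) : tree_step R (Leaf ar x) (Leaf ar x)
| step_node (o : Op) (p : param (ar o)) (k k' : child (ar o) -> tree ar X) :
    (forall i, R (k i) (k' i)) -> tree_step R (Node p k) (Node p k').

Lemma bisim_coind (R : tree ar X -> tree ar X -> Prop) :
  (forall t t', R t t' -> tree_step R t t') -> forall t t', R t t' -> bisim t t'.
Proof.
  intros HR. cofix CH. intros t t' Htt'.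
  destruct (HR t t' Htt'); constructor. intro i. apply CH. auto.
Qed.

Lemma bisim_sym (t t' : tree ar X) : bisim t t' -> bisim t' t.
Proof.
  apply bisim_coind with (R := fun a b => bisim b a).
  clear t t'. intros t t' H. destruct H; constructor; auto.
Qed.

Lemma bisim_tle : forall t t' : tree ar X, bisim t t' -> tle t t'.
Proof.
  cofix CH. intros t t' H. destruct H; constructor. intro i. apply CH. auto.
Qed.

End Bisimulation.

Section Unfolding.
Variables (Op : Type) (ar : Op -> arity).

Definition tree_unfold (X : Type) (t : tree ar X) : tree ar X :=
  match t with Bot => Bot ar X | Leaf x => Leaf ar x | Node _ p k => Node p k end.

Lemma tree_unfold_eq (X : Type) (t : tree ar X) : t = tree_unfold t.
Proof. destruct t; reflexivity. Qed.

CoFixpoint tmap (X Y : Type) (f : X -> Y) (t : tree ar X) : tree ar Y :=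
  match t with
  | Bot => Bot ar Y
  | Leaf x => Leaf ar (f x)
  | Node _ p k => Node p (fun i => tmap f (k i))
  end.

Lemma tmap_Bot X Y (f : X -> Y) : tmap f (Bot ar X) = Bot ar Y.
Proof. rewrite (tree_unfold_eq (tmap _ _)). reflexivity. Qed.

Lemma tmap_Leaf X Y (f : X -> Y) x : tmap f (Leaf ar x) = Leaf ar (f x).
Proof. rewrite (tree_unfold_eq (tmap _ _)). reflexivity. Qed.

Lemma tmap_Node X Y (f : X -> Y) o (p : param (ar o)) k :
  tmap f (Node p k) = Node p (fun i => tmap f (k i)).
Proof. rewrite (tree_unfold_eq (tmap _ _)). reflexivity. Qed.

Lemma restr_Bot X (P : X -> Prop) : restr P (Bot ar X) = Bot ar unit.
Proof. rewrite (tree_unfold_eq (restr _ _)). reflexivity. Qed.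

Lemma restr_Leaf X (P : X -> Prop) x :
  restr P (Leaf ar x) = if excluded_middle_informative (P x) then Leaf ar tt else Bot ar unit.
Proof.
  rewrite (tree_unfold_eq (restr _ _)). simpl.
  destruct (excluded_middle_informative (P x)); reflexivity.
Qed.

Lemma restr_Node X (P : X -> Prop) o (p : param (ar o)) k :
  restr P (Node p k) = Node p (fun i => restr P (k i)).
Proof. rewrite (tree_unfold_eq (restr _ _)). reflexivity. Qed.

Lemma mu_Bot X : mu (Bot ar (tree ar X)) = Bot ar X.
Proof. rewrite (tree_unfold_eq (mu _)). reflexivity. Qed.

Lemma mu_Leaf X (t : tree ar X) : mu (Leaf ar t) = t.
Proof. rewrite (tree_unfold_eq (mu _)). destruct t; reflexivity. Qed.

Lemma mu_Node X o (p : param (ar o)) (k : child (ar o) -> tree ar (tree ar X)) :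
  mu (Node p k) = Node p (fun i => mu (k i)).
Proof. rewrite (tree_unfold_eq (mu _)). reflexivity. Qed.

End Unfolding.

Section Restriction.
Variables (Op : Type) (ar : Op -> arity).

Lemma restr_restr X (P : unit -> Prop) (Q R : X -> Prop) (t : tree ar X) :
  (forall x, R x <-> Q x /\ P tt) -> bisim (restr P (restr Q t)) (restr R t).
Proof.
  intros HR.
  apply bisim_coind with (R := fun a b => exists t, a = restr P (restr Q t) /\ b = restr R t);
    [|eauto].
  clear t. intros a b [t [-> ->]]. destruct t as [|x|o p k].
  - rewrite !restr_Bot. constructor.
  - rewrite !restr_Leaf.
    destruct (excluded_middle_informative (Q x)) as [Qx|nQx];
      [rewrite restr_Leaf; destruct (excluded_middle_informative (P tt)) as [Ptt|nPtt]|];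
      rewrite ?restr_Bot;
      destruct (excluded_middle_informative (R x)) as [Rx|nRx]; try constructor;
      firstorder.
  - rewrite !restr_Node. constructor. eauto.
Qed.

Lemma restr_tmap X Y (Q : Y -> Prop) (f : X -> Y) (R : X -> Prop) (t : tree ar X) :
  (forall x, R x <-> Q (f x)) -> bisim (restr Q (tmap f t)) (restr R t).
Proof.
  intros HR.
  apply bisim_coind with (R := fun a b => exists t, a = restr Q (tmap f t) /\ b = restr R t);
    [|eauto].
  clear t. intros a b [t [-> ->]]. destruct t as [|x|o p k].
  - rewrite tmap_Bot, !restr_Bot. constructor.
  - rewrite tmap_Leaf, !restr_Leaf.
    destruct (excluded_middle_informative (Q (f x)));
      destruct (excluded_middle_informative (R x)); try constructor; firstorder.
  - rewrite tmap_Node, !restr_Node. constructor. eauto.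
Qed.

Lemma restr_mu X (P : X -> Prop) (r : tree ar (tree ar X)) :
  bisim (restr P (mu r)) (mu (tmap (restr P) r)).
Proof.
  (* The relation contains the diagonal, which is what a leaf of r steps to. *)
  apply bisim_coind with (R := fun a b =>
    a = b \/ exists r, a = restr P (mu r) /\ b = mu (tmap (restr P) r)); [|eauto].
  clear r. intros a b [<-|[r [-> ->]]].
  - destruct a; constructor; auto.
  - destruct r as [|t|o p k].
    + rewrite tmap_Bot, !mu_Bot, restr_Bot. constructor.
    + rewrite tmap_Leaf, !mu_Leaf. destruct (restr P t); constructor; auto.
    + rewrite tmap_Node, !mu_Node, restr_Node. constructor. eauto.
Qed.

Lemma restr_True (t : tree ar unit) : bisim (restr (fun _ => True) t) t.
Proof.
  apply bisim_coind with (R := fun a b => a = restr (fun _ => True) b); [|reflexivity].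
  clear t. intros a t ->. destruct t as [|[]|o p k].
  - rewrite restr_Bot. constructor.
  - rewrite restr_Leaf. destruct (excluded_middle_informative True); [constructor|tauto].
  - rewrite restr_Node. constructor. reflexivity.
Qed.

End Restriction.

Fixpoint ftop_to_bot (O : Type) (phi : formula O) : formula O :=
  match phi with
  | FTop o | FBotm o => FBotm o
  | FOr _ f => FOr (fun j => ftop_to_bot (f j))
  | FAnd _ f => FAnd (fun j => ftop_to_bot (f j))
  end.

Section Decomposability.
Variables (Op : Type) (ar : Op -> arity) (O : Type) (sem : O -> tree ar unit -> Prop).

Definition has_decompositions : Prop :=
  forall (r : tree ar (tree ar unit)) (o : O),
    modal sem o (fun _ : unit => True) (mu r) ->
    exists (J : Type) (oi : J -> O) (Phi : J -> formula O),
      (forall i : J, modal sem (oi i) (fsem sem (Phi i)) r) /\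
      (forall r' : tree ar (tree ar unit),
         (forall i : J, modal sem (oi i) (fsem sem (Phi i)) r') ->
         modal sem o (fun _ : unit => True) (mu r')).

Lemma decomposable_has_decompositions : decomposable sem -> has_decompositions.
Proof.
  intros Hdec r o Hr.
  exists {p : O * formula O | modal sem (fst p) (fsem sem (snd p)) r},
    (fun p => fst (proj1_sig p)), (fun p => snd (proj1_sig p)).
  split.
  - intros [[o' phi] H]. exact H.
  - intros r' Hr'. apply (Hdec r r') with (phi := FTop o); [|exact Hr].
    intros o' phi H. exact (Hr' (exist _ (o', phi) H)).
Qed.

Lemma tri_atomic (t t' : tree ar unit) :
  (forall o, modal sem o (fun _ => True) t -> modal sem o (fun _ => True) t') ->
  (forall o, modal sem o (fun _ => False) t -> modal sem o (fun _ => False) t') ->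
  tri sem t t'.
Proof.
  intros Htop Hbot phi. induction phi as [o|o|J f IH|J f IH]; simpl.
  - apply Htop.
  - apply Hbot.
  - intros [j Hj]. exists j. auto.
  - auto.
Qed.

Hypothesis sem_up : upwards_closed sem.

Lemma sem_bisim o (t t' : tree ar unit) : bisim t t' -> (sem o t <-> sem o t').
Proof.
  intros H. split; intros Ht; apply (sem_up Ht), bisim_tle; [|apply bisim_sym]; exact H.
Qed.

Lemma fsem_ftop_to_bot phi t :
  fsem sem (ftop_to_bot phi) t <-> fsem sem phi (restr (fun _ => False) t).
Proof.
  induction phi as [o|o|J f IH|J f IH]; simpl; unfold modal.
  - symmetry. apply sem_bisim, restr_restr. tauto.
  - symmetry. apply sem_bisim, restr_restr. tauto.
  - split; intros [j Hj]; exists j; apply IH; exact Hj.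
  - split; intros H j; apply IH; apply H.
Qed.

Lemma modal_tmap_restr_False o phi (r : tree ar (tree ar unit)) :
  modal sem o (fsem sem phi) (tmap (restr (fun _ => False)) r) <->
  modal sem o (fsem sem (ftop_to_bot phi)) r.
Proof.
  apply sem_bisim, restr_tmap. intro t. apply fsem_ftop_to_bot.
Qed.

Lemma prec_tmap_restr_False (r r' : tree ar (tree ar unit)) :
  prec sem r r' ->
  prec sem (tmap (restr (fun _ => False)) r) (tmap (restr (fun _ => False)) r').
Proof.
  intros Hrr' o phi. rewrite !modal_tmap_restr_False. apply Hrr'.
Qed.

Lemma modal_False_mu o (r : tree ar (tree ar unit)) :
  modal sem o (fun _ => False) (mu r) <->
  modal sem o (fun _ => True) (mu (tmap (restr (fun _ => False)) r)).
Proof.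
  unfold modal. rewrite (sem_bisim o (restr_mu _ r)).
  symmetry. apply sem_bisim, restr_True.
Qed.

Lemma has_decompositions_prec_mu (r r' : tree ar (tree ar unit)) o :
  has_decompositions -> prec sem r r' ->
  modal sem o (fun _ => True) (mu r) -> modal sem o (fun _ => True) (mu r').
Proof.
  intros Hdecs Hrr' Hr.
  destruct (Hdecs r o Hr) as [J [oi [Phi [HrPhi HPhi]]]].
  apply HPhi. intro i. apply Hrr', HrPhi.
Qed.

Lemma has_decompositions_decomposable : has_decompositions -> decomposable sem.
Proof.
  intros Hdecs r r' Hrr'. apply tri_atomic; intro o.
  - apply (has_decompositions_prec_mu Hdecs Hrr').
  - rewrite !modal_False_mu.
    apply (has_decompositions_prec_mu Hdecs (prec_tmap_restr_False Hrr')).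
Qed.

End Decomposability.

Theorem lemma4p17 (Op : Type) (ar : Op -> arity)
  (O : Type) (sem : O -> tree ar unit -> Prop) :
  upwards_closed sem ->
  (decomposable sem <->
   forall (r : tree ar (tree ar unit)) (o : O),
     modal sem o (fun _ : unit => True) (mu r) ->
     exists (J : Type) (oi : J -> O) (Phi : J -> formula O),
       (forall i : J, modal sem (oi i) (fsem sem (Phi i)) r) /\
       (forall r' : tree ar (tree ar unit),
          (forall i : J, modal sem (oi i) (fsem sem (Phi i)) r') ->
          modal sem o (fun _ : unit => True) (mu r'))).
Proof.
  intros sem_up. split.
  - apply decomposable_has_decompositions.
  - apply has_decompositions_decomposable, sem_up.
Qed.
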